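(* Let $X$ be a compact Riemannian manifold, $T:X\to X$ a diffeomorphism, and $f:X\to\mathbb{R}^\omega$ a continuous cocycle. Then for every $\epsilon>0$ there is a continuous cocycle $g:X\to\mathbb{R}^\omega$ with $\sup_{x\in X} d(f(x),g(x))<\epsilon$ such that the skew-product $T_g(x,v)=(T(x),g(x)+v)$ on $X\times\mathbb{R}^\omega$ is not transitive. In particular, no cocycle $X\to\mathbb{R}^\omega$ is stably transitive in the supremum metric, i.e. the set of transitive cocycles has empty interior.
   Context: $\mathbb{R}^\omega=\prod_{n=1}^\infty\mathbb{R}$ with metric $d(\{a_n\},\{b_n\})=\sum_{n=1}^\infty 2^{-n}\frac{|a_n-b_n|}{1+|a_n-b_n|}$. A map is transitive if some point has dense forward orbit; a cocycle $f$ is transitive if $T_f$ is, and stably transitive if all cocycles sufficiently close to it in the supremum metric $\sup_x d(f(x),g(x))$ are transitive. *)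

From Stdlib Require Import Reals List.
From Coquelicot Require Import Coquelicot.
Open Scope R_scope.

Record is_metric {X : Type} (d : X -> X -> R) : Prop := {
  metric_nonneg : forall x y, 0 <= d x y;
  metric_eq0 : forall x y, d x y = 0 <-> x = y;
  metric_sym : forall x y, d x y = d y x;
  metric_triangle : forall x y z, d x z <= d x y + d y z }.

Definition open_in {X : Type} (d : X -> X -> R) (U : X -> Prop) : Prop :=
  forall x, U x -> exists e, 0 < e /\ forall y, d x y < e -> U y.

Definition compact_space {X : Type} (d : X -> X -> R) : Prop :=
  forall (I : Type) (U : I -> X -> Prop),
    (forall i, open_in d (U i)) -> (forall x, exists i, U i x) ->
    exists l : list I, forall x, exists i, In i l /\ U i x.

Definition continuous_map {X Y : Type} (dX : X -> X -> R) (dY : Y -> Y -> R)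
  (f : X -> Y) : Prop :=
  forall x e, 0 < e -> exists delta, 0 < delta /\
    forall y, dX x y < delta -> dY (f x) (f y) < e.

Definition homeomorphism {X : Type} (dX : X -> X -> R) (T : X -> X) : Prop :=
  continuous_map dX dX T /\
  exists Tinv : X -> X, (forall x, Tinv (T x) = x) /\ (forall x, T (Tinv x) = x)
                        /\ continuous_map dX dX Tinv.

Definition Romega := nat -> R.

(* d(a,b) = sum_{n>=1} 2^{-n} |a_n-b_n|/(1+|a_n-b_n|); coordinate n of the paper is index n-1 here *)
Definition romega_dist (a b : Romega) : R :=
  Series (fun n => (/2) ^ (S n) * (Rabs (a n - b n) / (1 + Rabs (a n - b n)))).

Definition skew {X : Type} (T : X -> X) (g : X -> Romega) (p : X * Romega) : X * Romega :=
  (T (fst p), fun n => g (fst p) n + snd p n).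

(* a map is transitive if some point has dense forward orbit;
   X x R^omega carries the product topology (metric max(dX, d)) *)
Definition transitive_map {X : Type} (dX : X -> X -> R) (S : X * Romega -> X * Romega) : Prop :=
  exists p : X * Romega, forall (q : X * Romega) (e : R), 0 < e ->
    exists k : nat, dX (fst (Nat.iter k S p)) (fst q) < e /\
                    romega_dist (snd (Nat.iter k S p)) (snd q) < e.

Definition sup_dist_lt {X : Type} (f g : X -> Romega) (eps : R) : Prop :=
  exists M, M < eps /\ forall x, romega_dist (f x) (g x) <= M.

Definition cocycle_transitive {X : Type} (dX : X -> X -> R) (T : X -> X) (f : X -> Romega) : Prop :=
  transitive_map dX (skew T f).

Definition stably_transitive {X : Type} (dX : X -> X -> R) (T : X -> X) (f : X -> Romega) : Prop :=
  exists delta, 0 < delta /\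
    forall g : X -> Romega, continuous_map dX romega_dist g -> sup_dist_lt f g delta ->
      cocycle_transitive dX T g.

(** Replacing one coordinate of a cocycle by the constant 1 moves it by at
    most the weight of that coordinate in the metric, and keeps it continuous.
    Along every orbit of the new skew product that coordinate only increases,
    so no orbit comes back close to its starting point shifted by -1 in that
    coordinate. *)

From Stdlib Require Import Arith Reals Lra Lia.
From Coquelicot Require Import Coquelicot.
Open Scope R_scope.

Definition romega_term (a b : Romega) (n : nat) : R :=
  (/2) ^ (S n) * (Rabs (a n - b n) / (1 + Rabs (a n - b n))).

Lemma romega_dist_Series a b : romega_dist a b = Series (romega_term a b).
Proof. reflexivity. Qed.

Lemma ratio_one_plus_bounds t : 0 <= t -> 0 <= t / (1 + t) <= 1.
Proof.
  intro t_ge0; split; [apply Rdiv_le_0_compat; lra |].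
  apply Rmult_le_reg_r with (1 + t); [lra |].
  unfold Rdiv; rewrite Rmult_assoc, Rinv_l; lra.
Qed.

Lemma ratio_one_plus_ge_half t : 1 <= t -> /2 <= t / (1 + t).
Proof.
  intro t_ge1; apply Rmult_le_reg_r with (1 + t); [lra |].
  unfold Rdiv; rewrite Rmult_assoc, Rinv_l; lra.
Qed.

Lemma romega_term_bounds a b n : 0 <= romega_term a b n <= (/2) ^ (S n).
Proof.
  pose proof (ratio_one_plus_bounds _ (Rabs_pos (a n - b n))).
  pose proof (pow_lt (/2) (S n) ltac:(lra)).
  unfold romega_term; split; [apply Rmult_le_pos; lra |].
  rewrite <- (Rmult_1_r ((/2) ^ S n)) at 2; apply Rmult_le_compat_l; lra.
Qed.

Lemma romega_term_eq0 a b n : a n = b n -> romega_term a b n = 0.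
Proof.
  intro ab_eq; unfold romega_term; rewrite ab_eq, Rminus_diag, Rabs_R0; lra.
Qed.

Lemma ex_series_romega_term a b : ex_series (romega_term a b).
Proof.
  apply (@ex_series_le R_AbsRing R_CompleteNormedModule _ (fun n => (/2) ^ n)).
  - intro n; change norm with Rabs; simpl.
    pose proof (romega_term_bounds a b n); pose proof (pow_lt (/2) n ltac:(lra)).
    simpl in *; rewrite Rabs_pos_eq; lra.
  - apply ex_series_geom; rewrite Rabs_pos_eq; lra.
Qed.

Lemma romega_dist_le_termwise a b c d :
  (forall n, romega_term a b n <= romega_term c d n) ->
  romega_dist a b <= romega_dist c d.
Proof.
  intro le_ab_cd; rewrite !romega_dist_Series; apply Series_le; [| apply ex_series_romega_term].
  intro n; split; [apply romega_term_bounds | apply le_ab_cd].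
Qed.

Definition single (N : nat) (c : R) (n : nat) : R :=
  if Nat.eq_dec n N then c else 0.

Lemma sum_n_single N c m : sum_n (single N c) m = if le_dec N m then c else 0.
Proof.
  induction m as [| m IH].
  - rewrite sum_O; unfold single.
    destruct (Nat.eq_dec 0 N), (le_dec N 0); now try lia.
  - rewrite sum_Sn, IH; unfold single; change plus with Rplus.
    destruct (le_dec N m), (Nat.eq_dec (S m) N), (le_dec N (S m)); try lia; lra.
Qed.

Lemma is_series_single N c : is_series (single N c) c.
Proof.
  change (is_lim_seq (sum_n (single N c)) c).
  apply (is_lim_seq_ext_loc (fun _ => c)); [| apply is_lim_seq_const].
  exists N; intros m le_Nm; rewrite sum_n_single.
  destruct (le_dec N m); [reflexivity | lia].
Qed.

Lemma romega_term_le_dist a b N : romega_term a b N <= romega_dist a b.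
Proof.
  rewrite romega_dist_Series.
  rewrite <- (is_series_unique _ _ (is_series_single N (romega_term a b N))).
  apply Series_le; [| apply ex_series_romega_term].
  intro n; pose proof (romega_term_bounds a b n); unfold single.
  destruct (Nat.eq_dec n N) as [-> |]; lra.
Qed.

Lemma romega_dist_le_off_coord a b N :
  (forall n, n <> N -> a n = b n) -> romega_dist a b <= (/2) ^ (S N).
Proof.
  intro agree; rewrite romega_dist_Series.
  rewrite <- (is_series_unique _ _ (is_series_single N ((/2) ^ S N))).
  apply Series_le; [| eexists; apply is_series_single].
  intro n; pose proof (romega_term_bounds a b n); unfold single.
  destruct (Nat.eq_dec n N) as [-> | ne_nN]; [lra |].
  rewrite romega_term_eq0 by auto; lra.
Qed.

Lemma romega_dist_ge_coord_gap a b N :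
  1 <= Rabs (a N - b N) -> (/2) ^ (S N) * /2 <= romega_dist a b.
Proof.
  intro gap; eapply Rle_trans; [| apply (romega_term_le_dist a b N)].
  pose proof (pow_lt (/2) (S N) ltac:(lra)).
  apply Rmult_le_compat_l; [lra | now apply ratio_one_plus_ge_half].
Qed.

Definition set_coord (a : Romega) (N : nat) (c : R) : Romega :=
  fun n => if Nat.eq_dec n N then c else a n.

Lemma romega_dist_set_coord a N c : romega_dist a (set_coord a N c) <= (/2) ^ (S N).
Proof.
  apply romega_dist_le_off_coord; intros n ne_nN; unfold set_coord.
  now destruct (Nat.eq_dec n N).
Qed.

Lemma romega_dist_set_coord_le a b N c :
  romega_dist (set_coord a N c) (set_coord b N c) <= romega_dist a b.
Proof.
  apply romega_dist_le_termwise; intro n; pose proof (romega_term_bounds a b n).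
  destruct (Nat.eq_dec n N) as [-> |].
  - rewrite romega_term_eq0; [lra | unfold set_coord; now destruct Nat.eq_dec].
  - unfold romega_term, set_coord; destruct (Nat.eq_dec n N); [lia | lra].
Qed.

Lemma continuous_set_coord (X : Type) (dX : X -> X -> R) (f : X -> Romega) N c :
  continuous_map dX romega_dist f ->
  continuous_map dX romega_dist (fun x => set_coord (f x) N c).
Proof.
  intros f_cont x e e_gt0; destruct (f_cont x e e_gt0) as [delta [delta_gt0 near]].
  exists delta; split; [exact delta_gt0 |].
  intros y dxy; eapply Rle_lt_trans; [apply romega_dist_set_coord_le | now apply near].
Qed.

Lemma skew_iter_coord_ge (X : Type) (T : X -> X) (g : X -> Romega) N x (a : Romega) k :
  (forall x, 0 <= g x N) -> a N <= snd (Nat.iter k (skew T g) (x, a)) N.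
Proof.
  intro g_ge0; induction k as [| k IH]; [apply Rle_refl |].
  set (q := Nat.iter k (skew T g) (x, a)) in IH.
  change (Nat.iter (S k) (skew T g) (x, a)) with (skew T g q).
  specialize (g_ge0 (fst q)); unfold skew; simpl snd; lra.
Qed.

Lemma not_transitive_coord_ge0 (X : Type) (dX : X -> X -> R) (T : X -> X)
  (g : X -> Romega) N :
  (forall x, 0 <= g x N) -> ~ cocycle_transitive dX T g.
Proof.
  intros g_ge0 [[x a] dense_orbit].
  assert (e_gt0 : 0 < (/2) ^ (S N) * /2) by (pose proof (pow_lt (/2) (S N) ltac:(lra)); lra).
  destruct (dense_orbit (x, fun n => a n - 1) _ e_gt0) as [k [_ close]].
  pose proof (skew_iter_coord_ge X T g N x a k g_ge0).
  apply (Rlt_not_le _ _ close), romega_dist_ge_coord_gap; simpl snd.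
  rewrite Rabs_pos_eq; lra.
Qed.

Lemma exists_close_nontransitive (X : Type) (dX : X -> X -> R) (T : X -> X)
  (f : X -> Romega) eps :
  continuous_map dX romega_dist f -> 0 < eps ->
  exists g : X -> Romega, continuous_map dX romega_dist g /\
    sup_dist_lt f g eps /\ ~ cocycle_transitive dX T g.
Proof.
  intros f_cont eps_gt0.
  destruct (pow_lt_1_zero (/2) ltac:(rewrite Rabs_pos_eq; lra) eps eps_gt0) as [N small].
  exists (fun x => set_coord (f x) N 1); split; [| split].
  - now apply continuous_set_coord.
  - exists ((/2) ^ S N); split; [| intro x; apply romega_dist_set_coord].
    specialize (small (S N) ltac:(lia)).
    rewrite Rabs_pos_eq in small by (apply pow_le; lra); exact small.
  - apply not_transitive_coord_ge0 with N; intro x.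
    unfold set_coord; destruct (Nat.eq_dec N N); [lra | congruence].
Qed.

Theorem mainTheorem6 (X : Type) (dX : X -> X -> R) (T : X -> X)
  (hd : is_metric dX) (hcomp : compact_space dX) (hT : homeomorphism dX T) :
  (forall f : X -> Romega, continuous_map dX romega_dist f ->
     forall eps, 0 < eps ->
       exists g : X -> Romega, continuous_map dX romega_dist g /\
         sup_dist_lt f g eps /\ ~ cocycle_transitive dX T g)
  /\
  (forall f : X -> Romega, continuous_map dX romega_dist f ->
     ~ stably_transitive dX T f).
Proof.
  split.
  - intros f f_cont eps eps_gt0; now apply exists_close_nontransitive.
  - intros f f_cont [delta [delta_gt0 stable]].
    destruct (exists_close_nontransitive X dX T f delta f_cont delta_gt0)
      as [g [g_cont [g_close g_nontrans]]].
    exact (g_nontrans (stable g g_cont g_close)).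
Qed.
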